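(* Let $V=\mathbb{C}^6$ and let $\ell,\ell'\subset\mathbb{P}(\wedge^2V)$ be two distinct general lines meeting at a point $\omega''$. Let $d=\mathbb{P}(D)$ and $d'=\mathbb{P}(D')$ be their pivots, and suppose $d\cap d'=\emptyset$ in $\mathbb{P}^5=\mathbb{P}(V)$. Then there exist a basis $e_0,e_1$ of $D$ and a basis $e_2,e_3$ of $D'$ such that $\omega''=[e_0\wedge e_2+e_1\wedge e_3]$.
   Context: Elements of $\wedge^2\mathbb{C}^6$ are identified with skew-symmetric $6\times6$ matrices; rank means matrix rank. Fix a basis $f_0,\dots,f_5$ of $V$. A projective line in $\mathbb{P}(\wedge^2V)$ all of whose points have rank four is called general if it is $PGL_6$-equivalent to the line $\ell_g$ spanned by $f_0\wedge f_2+f_1\wedge f_3$ and $f_0\wedge f_4+f_1\wedge f_5$. A general line $\ell$ is contained in $\mathbb{P}(W\wedge V)$ (the embedded tangent space to $\mathbb{G}(1,5)$ at $[W]$) for a unique $2$-dimensional subspace $W\subset V$ (for $\ell_g$, $W=\langle f_0,f_1\rangle$); the projective line $\mathbb{P}(W)\subset\mathbb{P}(V)$ is called the pivot of $\ell$. Work over $\mathbb{C}$. *)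

(* Field: C modelled as R[i] = complex R for R : realType
   (mathcomp-real-closed's complex numbers over the reals). *)
From HB Require Import structures.
From mathcomp Require Import all_boot all_order all_algebra.
From mathcomp Require Export complex.
From mathcomp Require Import reals.
Set Implicit Arguments. Unset Strict Implicit. Unset Printing Implicit Defensive.
Import Order.TTheory GRing.Theory Num.Theory.
Local Open Scope ring_scope.

Section Defs.
Variable F : fieldType.

(* Elements of wedge^2 V, V = F^6, as skew-symmetric 6x6 matrices;
   vectors of V are row vectors. *)
Definition skew (X : 'M[F]_6) : Prop := X^T = - X.

Definition wedge (u v : 'rV[F]_6) : 'M[F]_6 := u^T *m v - v^T *m u.

Definition fb (i : 'I_6) : 'rV[F]_6 := delta_mx 0 i.

Definition on_line (A B X : 'M[F]_6) : Prop :=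
  exists a b : F, X = a *: A + b *: B.

Definition is_line (A B : 'M[F]_6) : Prop :=
  [/\ skew A, skew B &
      forall a b : F, a *: A + b *: B = 0 -> a = 0 /\ b = 0].

Definition rank4_line (A B : 'M[F]_6) : Prop :=
  forall a b : F, (a, b) != (0, 0) -> \rank (a *: A + b *: B) = 4%N.

Definition Lg0 : 'M[F]_6 := wedge (fb 0) (fb 2) + wedge (fb 1) (fb 3).
Definition Lg1 : 'M[F]_6 := wedge (fb 0) (fb 4) + wedge (fb 1) (fb 5).

(* g in GL_6 acts on V (rows) by u |-> u *m P, hence on wedge^2 V by
   X |-> P^T X P.  The line spanned by A,B is general if some such P
   maps it onto l_g. *)
Definition general_line (A B : 'M[F]_6) : Prop :=
  [/\ is_line A B, rank4_line A B &
      exists P : 'M[F]_6, P \in unitmx /\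
        forall X, on_line A B X <-> on_line Lg0 Lg1 (P^T *m X *m P)].

(* W /\ V : the span of all w /\ v with w in W (W given by the row space
   of a matrix) *)
Definition in_wedgeV (m : nat) (W : 'M[F]_(m, 6)) (X : 'M[F]_6) : Prop :=
  exists (n : nat) (w v : 'I_n -> 'rV[F]_6),
    (forall i, (w i <= W)%MS) /\ X = \sum_(i < n) wedge (w i) (v i).

(* W (row space of a 2x6 matrix of rank 2) is a pivot of the line (A,B):
   the line is contained in P(W /\ V). *)
Definition is_pivot (A B : 'M[F]_6) (W : 'M[F]_(2, 6)) : Prop :=
  \rank W = 2%N /\ forall X, on_line A B X -> in_wedgeV W X.

End Defs.

From HB Require Import structures.
From mathcomp Require Import all_boot all_order all_algebra.
From mathcomp Require Import complex reals.
Import Order.TTheory GRing.Theory Num.Theory.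
Set Implicit Arguments. Unset Strict Implicit.
Local Open Scope ring_scope.

(* omega'' has rank four: it is congruent to a point of l_g, that is to
   f0 /\ u + f1 /\ v with f0, f1, u, v independent.  It lies in D /\ V and in
   D' /\ V, so omega'' = D^T X - X^T D = D'^T Y - Y^T D'.  Rank four forces the
   rows of X and Y into the row space of omega'', which is D + D' because d and
   d' are disjoint.  As a skew form on D (+) D', omega'' therefore has zero
   D'D'-block (first expression) and zero DD-block (second expression), so
   omega'' = D^T E - E^T D with E = M D'; E has rank two since omega'' has
   rank four.  The rows of D and of E are the required bases. *)

Section WedgeForms.
Variable F : fieldType.

Definition wedge_mx m n (Z W : 'M[F]_(m, n)) : 'M[F]_n := Z^T *m W - W^T *m Z.

Lemma wedge_mx_col_mx m1 m2 n (Z1 W1 : 'M[F]_(m1, n)) (Z2 W2 : 'M[F]_(m2, n)) :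
  wedge_mx (col_mx Z1 Z2) (col_mx W1 W2) = wedge_mx Z1 W1 + wedge_mx Z2 W2.
Proof. by rewrite /wedge_mx !tr_col_mx !mul_row_col opprD addrACA. Qed.

Lemma wedge_mx_row_mx m n1 n2 (Z1 W1 : 'M[F]_(m, n1)) (Z2 W2 : 'M[F]_(m, n2)) :
  wedge_mx (row_mx Z1 Z2) (row_mx W1 W2) =
  block_mx (wedge_mx Z1 W1) (Z1^T *m W2 - W1^T *m Z2)
           (Z2^T *m W1 - W2^T *m Z1) (wedge_mx Z2 W2).
Proof. by rewrite /wedge_mx !tr_row_mx !mul_col_row opp_block_mx add_block_mx. Qed.

Lemma wedge_mxM m p n (Z W : 'M[F]_(m, p)) (G : 'M[F]_(p, n)) :
  wedge_mx (Z *m G) (W *m G) = G^T *m wedge_mx Z W *m G.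
Proof. by rewrite /wedge_mx mulmxBr mulmxBl !trmx_mul !mulmxA. Qed.

Lemma wedge_mxDr m n (Z W1 W2 : 'M[F]_(m, n)) :
  wedge_mx Z (W1 + W2) = wedge_mx Z W1 + wedge_mx Z W2.
Proof. by rewrite /wedge_mx mulmxDr linearD /= mulmxDl opprD addrACA. Qed.

Lemma wedge_mxZr m n a (Z W : 'M[F]_(m, n)) :
  wedge_mx Z (a *: W) = a *: wedge_mx Z W.
Proof. by rewrite /wedge_mx -scalemxAr linearZ /= -scalemxAl scalerBr. Qed.

Lemma wedge_mx_sub m n (Z W : 'M[F]_(m, n)) : (wedge_mx Z W <= col_mx W Z)%MS.
Proof. by rewrite /wedge_mx -mulNmx -mul_row_col submxMl. Qed.

Lemma wedge_mx_full_eqmx m n (Z W : 'M[F]_(m, n)) :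
  \rank (wedge_mx Z W) = (m + m)%N -> (wedge_mx Z W == col_mx W Z)%MS.
Proof.
move=> rkZW; have [_ eq_sub] := mxrank_leqif_sup (wedge_mx_sub Z W).
rewrite wedge_mx_sub -eq_sub eqn_leq mxrankS ?wedge_mx_sub //= rkZW.
exact: rank_leq_row.
Qed.

Lemma congr_row_free_inj m n (G : 'M[F]_(m, n)) (K L : 'M[F]_m) :
  row_free G -> G^T *m K *m G = G^T *m L *m G -> K = L.
Proof.
move=> /row_freeP[H GH] eqKL.
have cancel_G Z : H^T *m (G^T *m Z *m G) *m H = Z.
  by rewrite -!mulmxA GH mulmx1 mulmxA -trmx_mul GH trmx1 mul1mx.
by rewrite -(cancel_G K) eqKL cancel_G.
Qed.

Lemma mxrank_congr_row_free m n (G : 'M[F]_(m, n)) (K : 'M[F]_m) :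
  row_free G -> \rank (G^T *m K *m G) = \rank K.
Proof.
move=> freeG; rewrite mxrankMfree // -mxrank_tr trmx_mul trmxK.
by rewrite mxrankMfree // mxrank_tr.
Qed.

Lemma mxrank_wedge_mx_row_free m n (Z W : 'M[F]_(m, n)) :
  row_free (col_mx Z W) -> \rank (wedge_mx Z W) = (m + m)%N.
Proof.
move=> freeG.
have -> : wedge_mx Z W =
    wedge_mx (row_mx 1%:M 0 *m col_mx Z W) (row_mx 0 1%:M *m col_mx Z W).
  by rewrite !mul_row_col !mul1mx !mul0mx addr0 add0r.
rewrite wedge_mxM mxrank_congr_row_free // wedge_mx_row_mx /wedge_mx.
rewrite !(trmx1, trmx0, mul1mx, mul0mx, mulmx1, mulmx0, subr0, sub0r, subrr, oppr0).
apply: mxrank_unit; apply: (proj1 (mulmx1_unit (B := block_mx 0 (- 1%:M) 1%:M 0) _)).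
rewrite mulmx_block !(mulmx0, mul0mx, mulmx1, mul1mx, mulNmx, mulmxN, addr0, add0r, opprK).
by rewrite -scalar_mx_block.
Qed.

Lemma row_free_col_mx_gram m n (Z V U : 'M[F]_(m, n)) (c : F) :
  c != 0 -> Z *m Z^T = 1%:M -> Z *m U^T = 0 -> V *m Z^T = 0 -> V *m U^T = c%:M ->
  row_free (col_mx Z V).
Proof.
move=> c0 ZZ ZU VZ VU; apply/row_freeP; exists (row_mx Z^T (c^-1 *: U^T)).
rewrite mul_col_row -!scalemxAr ZZ ZU VZ VU scaler0 scale_scalar_mx mulVf //.
by rewrite -scalar_mx_block.
Qed.

Definition fb_pair (i j : 'I_6) : 'M[F]_(1 + 1, 6) := col_mx (fb F i) (fb F j).

Lemma fb_gram (i j : 'I_6) : fb F i *m (fb F j)^T = (i == j)%:R%:M.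
Proof.
rewrite /fb trmx_delta mul_delta_mx_cond.
by apply/matrixP => k l; rewrite !ord1 !mxE /= mulmxnE mxE eqxx mulr1n.
Qed.

Lemma fb_pair_gram (i j k l : 'I_6) :
  fb_pair i j *m (fb_pair k l)^T =
  block_mx (i == k)%:R%:M (i == l)%:R%:M (j == k)%:R%:M (j == l)%:R%:M.
Proof. by rewrite tr_col_mx mul_col_row !fb_gram. Qed.

Lemma lg_point_wedge_mx (a b : F) :
  a *: Lg0 F + b *: Lg1 F =
  wedge_mx (fb_pair 0 1) (a *: fb_pair 2 3 + b *: fb_pair 4 5).
Proof. by rewrite wedge_mxDr !wedge_mxZr !wedge_mx_col_mx. Qed.

Lemma mxrank_lg_point (a b : F) :
  (a, b) != (0, 0) -> \rank (a *: Lg0 F + b *: Lg1 F)%R = 4%N.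
Proof.
move=> ab0; rewrite lg_point_wedge_mx mxrank_wedge_mx_row_free //.
have [a0 | a0] := eqVneq a 0.
  have b0 : b != 0 by apply: contraNneq ab0 => b0; rewrite a0 b0.
  apply: (row_free_col_mx_gram (U := fb_pair 4 5) b0);
    rewrite ?mulmxDl -?scalemxAl ?a0 ?scale0r ?add0r !fb_pair_gram /=;
    by rewrite ?raddf0 ?block_mx0 -?scalar_mx_block ?scaler0 ?scale_scalar_mx ?mulr1.
apply: (row_free_col_mx_gram (U := fb_pair 2 3) a0);
  rewrite ?mulmxDl -?scalemxAl !fb_pair_gram /=;
  by rewrite ?raddf0 ?block_mx0 -?scalar_mx_block ?scaler0 ?addr0 ?scale_scalar_mx ?mulr1.
Qed.

(* The rank4_line part of general_line is of no use: inside \rank, + denotes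
   the sum of row spaces.  Rank four is transported from l_g instead. *)
Lemma mxrank_general_line_point (A B Om : 'M[F]_6) :
  general_line A B -> Om != 0 -> on_line A B Om -> \rank Om = 4%N.
Proof.
move=> [_ _ [P [unitP onP]]] Om0 /onP[a [b POm]].
have freeP : row_free P by rewrite row_free_unit.
rewrite -(mxrank_congr_row_free Om freeP) POm mxrank_lg_point //.
apply: contraNneq Om0 => -[a0 b0].
have POm0 : P^T *m Om *m P = P^T *m 0 *m P.
  by rewrite POm a0 b0 !scale0r addr0 mulmx0 mul0mx.
by rewrite (congr_row_free_inj freeP POm0).
Qed.

Lemma wedge_mx_common_pivot m n (D D' X Y : 'M[F]_(m, n)) :
  row_free (col_mx D D') -> (X <= col_mx D D')%MS -> (Y <= col_mx D D')%MS ->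
  wedge_mx D X = wedge_mx D' Y ->
  exists M : 'M[F]_m, wedge_mx D X = wedge_mx D (M *m D').
Proof.
set G := col_mx D D' => freeG /mulmxKpV X_G /mulmxKpV Y_G eqXY.
set K := X *m pinvmx G in X_G; set L := Y *m pinvmx G in Y_G.
have D_G : D = row_mx 1%:M 0 *m G by rewrite mul_row_col mul1mx mul0mx addr0.
have D'_G : D' = row_mx 0 1%:M *m G by rewrite mul_row_col mul1mx mul0mx add0r.
rewrite -X_G -Y_G -(hsubmxK K) -(hsubmxK L) D_G D'_G !wedge_mxM in eqXY.
have eqKL := congr_row_free_inj freeG eqXY.
rewrite !wedge_mx_row_mx /wedge_mx in eqKL.
rewrite !(trmx1, trmx0, mul1mx, mul0mx, mulmx1, mulmx0, subr0, sub0r) in eqKL.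
have [skewK1 K2E _ _] := eq_block_mx eqKL; exists (- (lsubmx L)^T).
rewrite -X_G -(hsubmxK K) D_G D'_G !mulmxA !wedge_mxM mul_mx_row mulmx0 mulmx1.
rewrite K2E !wedge_mx_row_mx /wedge_mx.
by rewrite !(trmx1, trmx0, mul1mx, mul0mx, mulmx1, mulmx0, subr0, sub0r) skewK1.
Qed.

Lemma rank4_in_wedgeV (D : 'M[F]_(2, 6)) (Om : 'M[F]_6) :
  \rank Om = 4%N -> in_wedgeV D Om ->
  exists X : 'M[F]_(2, 6), Om = wedge_mx D X /\ (Om == col_mx X D)%MS.
Proof.
move=> rkOm [k [w [v [wD OmE]]]].
pose X := \sum_i (w i *m pinvmx D)^T *m v i.
have OmX : Om = wedge_mx D X.
  rewrite OmE /wedge_mx mulmx_sumr raddf_sum /= mulmx_suml -sumrB.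
  apply: eq_bigr => i _; rewrite /wedge -[in LHS](mulmxKpV (wD i)).
  set c := w i *m pinvmx D.
  by rewrite trmx_mul (trmx_mul c^T) trmxK !mulmxA.
by exists X; split=> //; rewrite OmX wedge_mx_full_eqmx // -OmX.
Qed.

Lemma pivots_wedge_mx (D D' : 'M[F]_(2, 6)) (Om : 'M[F]_6) :
  \rank Om = 4%N -> (D :&: D')%MS = 0 -> \rank D = 2%N -> \rank D' = 2%N ->
  in_wedgeV D Om -> in_wedgeV D' Om ->
  exists E : 'M[F]_(2, 6), [/\ (E <= D')%MS, \rank E = 2%N & Om = wedge_mx D E].
Proof.
move=> rkOm cap0 rkD rkD' /(rank4_in_wedgeV rkOm)[X [OmX /andP[_ XD_Om]]].
move=> /(rank4_in_wedgeV rkOm)[Y [OmY /andP[_ YD'_Om]]].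
move: XD_Om YD'_Om; rewrite !col_mx_sub => /andP[X_Om D_Om] /andP[Y_Om D'_Om].
have rkG : \rank (col_mx D D') = 4%N.
  by rewrite -addsmxE mxrank_disjoint_sum // rkD rkD'.
have G_Om : (col_mx D D' <= Om)%MS by rewrite col_mx_sub D_Om D'_Om.
have Om_G : (Om <= col_mx D D')%MS.
  by have [_ <-] := mxrank_leqif_sup G_Om; rewrite rkOm rkG.
have freeG : row_free (col_mx D D') by rewrite /row_free rkG.
have [M OmM] := wedge_mx_common_pivot freeG (submx_trans X_Om Om_G)
  (submx_trans Y_Om Om_G) (etrans (esym OmX) OmY).
rewrite OmM in OmX; rewrite OmX in rkOm.
have rkED := eqmx_rank (wedge_mx_full_eqmx rkOm).
exists (M *m D'); split=> //; first exact: submxMl.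
have : (\rank (col_mx (M *m D') D) <= \rank (M *m D') + \rank D)%N.
  by rewrite -addsmxE mxrank_adds_leqif.
rewrite -rkED rkOm rkD addn2 !ltnS => rkE.
by apply/eqP; rewrite eqn_leq rank_leq_row rkE.
Qed.

Lemma col_mx_rows n (Z : 'M[F]_(2, n)) : col_mx (row 0 Z) (row 1 Z) = Z.
Proof.
apply/matrixP => i j; rewrite mxE; case: splitP => k Hk; rewrite mxE;
  congr (Z _ j); apply/val_inj => /=; rewrite Hk; by case: k {Hk} => [[]].
Qed.

Lemma wedge_mx_rows (Z W : 'M[F]_(2, 6)) :
  wedge_mx Z W = wedge (row 0 Z) (row 0 W) + wedge (row 1 Z) (row 1 W).
Proof. by rewrite -wedge_mx_col_mx !col_mx_rows. Qed.

End WedgeForms.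

Local Open Scope complex_scope.

Theorem mainTheorem7 (R : realType) (A B A' B' Om : 'M[R[i]]_6)
    (D D' : 'M[R[i]]_(2, 6)) :
  general_line A B -> general_line A' B' ->
  ~ (forall X, on_line A B X <-> on_line A' B' X) ->
  Om != 0 -> on_line A B Om -> on_line A' B' Om ->
  is_pivot A B D -> is_pivot A' B' D' ->
  (D :&: D')%MS = 0 ->
  exists e0 e1 e2 e3 : 'rV[R[i]]_6,
    [/\ [/\ (e0 <= D)%MS, (e1 <= D)%MS & \rank (col_mx e0 e1) = 2%N],
        [/\ (e2 <= D')%MS, (e3 <= D')%MS & \rank (col_mx e2 e3) = 2%N] &
        exists c : R[i], c != 0 /\ Om = c *: (wedge e0 e2 + wedge e1 e3)].
Proof.
move=> genAB _ _ Om0 onO onO' [rkD pivD] [rkD' pivD'] cap0.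
have rkOm := mxrank_general_line_point genAB Om0 onO.
have [E [E_D' rkE ->]] :=
  pivots_wedge_mx rkOm cap0 rkD rkD' (pivD _ onO) (pivD' _ onO').
exists (row 0 D), (row 1 D), (row 0 E), (row 1 E); split.
- by rewrite !row_sub col_mx_rows rkD.
- by rewrite !(submx_trans (row_sub _ _) E_D') col_mx_rows rkE.
- by exists 1; rewrite oner_eq0 scale1r wedge_mx_rows.
Qed.
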